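(* Let $\mathcal A\subset\mathbb R^n$ be compact with diameter $D_{\mathcal A}<\infty$, let $\mathcal X=\mathrm{conv}(\mathcal A)$, let $f$ have $L$-Lipschitz gradient, and let $\eta>1$. Run the AC-FW algorithm with the closed-loop Frank-Wolfe subroutine and a damping sequence satisfying Condition (D), with $L_0>0$. Then the subroutine satisfies parts (i) and (ii) of Condition (S); more precisely, for every $t\ge0$, $$|\mathcal G\cap\mathcal I_\eta\cap[t]|\ge t+1-\left\lfloor\log_\eta\!\left(\frac{L}{rL_0}\right)\right\rfloor.$$ If additionally $f$ is convex, then part (iii) of Condition (S) holds with $R=1$.
   Context: $D_{\mathcal A}:=\sup_{x,y\in\mathcal A}\|x-y\|_2$; $f:\mathbb R^n\to\mathbb R$ is differentiable with $\|\nabla f(x)-\nabla f(y)\|_2\le L\|x-y\|_2$. $x^\star$ is an optimal solution of $\min_{x\in\mathcal X}f(x)$. For $x\ne y$, $\ell(x,y):=2|f(y)-f(x)-\nabla f(x)^\top(y-x)|/\|y-x\|_2^2$, $\ell(x,x):=0$. AC-FW algorithm: given $\{r_t\}_{t\ge0}$ and a subroutine, pick $x_{-1}\in\mathcal A$, $x_0\in\arg\min_{v\in\mathcal A}\nabla f(x_{-1})^\top v$, $L_0:=\ell(x_{-1},x_0)$. For $t=0,1,\dots$: $v_t\in\arg\min_{v\in\mathcal A}\nabla f(x_t)^\top v$; the subroutine returns $(d_t,\gamma_t^{\max})$; $\gamma_t:=\min\{\nabla f(x_t)^\top d_t/(L_t\|d_t\|_2^2),\gamma_t^{\max}\}$;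 $\bar x_{t+1}:=x_t-\gamma_td_t$; $L_{t+1}:=\max\{\ell(x_t,\bar x_{t+1}),r_tL_t\}$; $x_{t+1}:=\bar x_{t+1}$ if $f(\bar x_{t+1})<f(x_t)$, else $x_{t+1}:=x_t$. Closed-loop Frank-Wolfe subroutine: $d_t:=x_t-v_t$, $\gamma_t^{\max}:=1$. $[t]:=\{0,\dots,t\}$; $\mathcal I_\eta:=\{t\ge0:L_{t+1}\le\eta L_t\}$; $\mathcal G:=\{t\ge0:\gamma_t^{\max}\ge1\text{ or }\gamma_t<\gamma_t^{\max}\}$. Condition (D): $r_t\in(0,1]$ for all $t$ and $r:=\prod_{t\ge0}r_t\in(0,1]$. Condition (S): for all $t\ge0$: (i) $\|d_t\|_2\le D_{\mathcal A}$ and $x_t-\gamma d_t\in\mathcal X$ for all $\gamma\in[0,\gamma_t^{\max}]$; (ii) $\mathcal G$ is infinite; (iii) if $f$ is convex, there is $R\ge1$ independent of $t$ with $\nabla f(x_t)^\top d_t\ge(f(x_t)-f(x^\star))/R$. *)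

From HB Require Import structures.
From mathcomp Require Import all_boot all_order all_algebra.
From mathcomp Require Import all_classical all_reals all_analysis.
Set Implicit Arguments. Unset Strict Implicit. Unset Printing Implicit Defensive.
Import Order.TTheory GRing.Theory Num.Theory.
Import numFieldNormedType.Exports.
Local Open Scope classical_set_scope.
Local Open Scope ring_scope.

Definition dotv {R : realType} {n : nat} (x y : 'rV[R]_n) : R :=
  \sum_(i < n) x 0 i * y 0 i.
Definition norm2 {R : realType} {n : nat} (x : 'rV[R]_n) : R :=
  Num.sqrt (dotv x x).

Definition grad {R : realType} {n : nat} (f : 'rV[R]_n -> R) (x : 'rV[R]_n)
  : 'rV[R]_n := \row_(i < n) ('d f x (delta_mx 0 i : 'rV[R]_n)).

Definition ellf {R : realType} {n : nat} (f : 'rV[R]_n -> R) (x y : 'rV[R]_n) : R :=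
  if x == y then 0
  else 2 * `|f y - f x - dotv (grad f x) (y - x)| / (norm2 (y - x)) ^+ 2.

Definition diam {R : realType} {n : nat} (A : set 'rV[R]_n) : R :=
  sup [set dd | exists x y, A x /\ A y /\ dd = norm2 (x - y)].

Definition conv_hull {R : realType} {n : nat} (A : set 'rV[R]_n) : set 'rV[R]_n :=
  [set z | exists (k : nat) (w : 'I_k -> R) (p : 'I_k -> 'rV[R]_n),
      (forall i, 0 <= w i) /\ \sum_(i < k) w i = 1 /\ (forall i, A (p i)) /\
      z = \sum_(i < k) w i *: p i].

Definition argmin_in {R : realType} {n : nat} (A : set 'rV[R]_n) (g v : 'rV[R]_n) : Prop :=
  A v /\ forall u, A u -> dotv g v <= dotv g u.

Definition convex_fun {R : realType} {n : nat} (f : 'rV[R]_n -> R) : Prop :=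
  forall (x y : 'rV[R]_n) (lam : R), 0 <= lam <= 1 ->
    f (lam *: x + (1 - lam) *: y) <= lam * f x + (1 - lam) * f y.

(* A run of AC-FW with the closed-loop Frank-Wolfe subroutine.
   xm1 = x_{-1}; x t = x_t; v t = v_t; d t = d_t; gmax t = gamma_t^max;
   gam t = gamma_t; xbar (t+1) = \bar x_{t+1} (xbar 0 is unused); Ls t = L_t;
   rs t = r_t. *)
Definition acfw_cfw_run {R : realType} {n : nat} (f : 'rV[R]_n -> R)
  (A : set 'rV[R]_n) (rs : nat -> R) (xm1 : 'rV[R]_n)
  (x v d : nat -> 'rV[R]_n) (gmax gam : nat -> R) (xbar : nat -> 'rV[R]_n)
  (Ls : nat -> R) : Prop :=
  A xm1 /\ argmin_in A (grad f xm1) (x 0%N) /\ Ls 0%N = ellf f xm1 (x 0%N) /\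
  forall t : nat,
    argmin_in A (grad f (x t)) (v t) /\
    d t = x t - v t /\ gmax t = 1 /\
    gam t = Num.min (dotv (grad f (x t)) (d t) / (Ls t * (norm2 (d t)) ^+ 2)) (gmax t) /\
    xbar t.+1 = x t - gam t *: d t /\
    Ls t.+1 = Num.max (ellf f (x t) (xbar t.+1)) (rs t * Ls t) /\
    x t.+1 = (if f (xbar t.+1) < f (x t) then xbar t.+1 else x t).

Definition in_G {R : realType} (gmax gam : nat -> R) (t : nat) : bool :=
  (1 <= gmax t) || (gam t < gmax t).
Definition in_I {R : realType} (eta : R) (Ls : nat -> R) (t : nat) : bool :=
  Ls t.+1 <= eta * Ls t.

From HB Require Import structures.
From mathcomp Require Import all_boot all_order all_algebra.
From mathcomp Require Import all_classical all_reals all_analysis.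
From mathcomp Require Import ring lra.
Import Order.TTheory GRing.Theory Num.Theory.
Import numFieldNormedType.Exports.
Local Open Scope classical_set_scope.
Local Open Scope ring_scope.

(* Every curvature estimate ell(x, y) is at most L by the descent lemma
   |f y - f x - <grad f x, y - x>| <= L/2 |y - x|^2, so L_t <= L for all t.
   Conversely L_{t+1} >= r_t L_t always and L_{t+1} > eta L_t when t is not
   in I_eta, hence L_t >= eta^m r L_0 where m counts the earlier steps outside
   I_eta; therefore m <= log_eta (L / (r L_0)).  As gamma_t^max = 1, every
   step lies in G.  By the optimality of v_t, gamma_t lies in [0, 1], so the
   iterates stay in conv(A) and |d_t| = |x_t - v_t| <= D_A; and for convex f
   and any z in conv(A),
   f(x_t) - f(z) <= <grad f(x_t), x_t - z> <= <grad f(x_t), x_t - v_t>. *)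

Section InnerProduct.
Context {R : realType} {n : nat}.
Implicit Types (x y z : 'rV[R]_n).

Lemma dotvC x y : dotv x y = dotv y x.
Proof. by apply: eq_bigr => i _; rewrite mulrC. Qed.

Lemma dotvDl x y z : dotv (x + y) z = dotv x z + dotv y z.
Proof. by rewrite /dotv -big_split; apply: eq_bigr => i _; rewrite mxE mulrDl. Qed.

Lemma dotvZl (a : R) x y : dotv (a *: x) y = a * dotv x y.
Proof. by rewrite /dotv mulr_sumr; apply: eq_bigr => i _; rewrite mxE mulrA. Qed.

Lemma dotvBl x y z : dotv (x - y) z = dotv x z - dotv y z.
Proof. by rewrite dotvDl -scaleN1r dotvZl mulN1r. Qed.

Lemma dotvDr x y z : dotv x (y + z) = dotv x y + dotv x z.
Proof. by rewrite dotvC dotvDl !(dotvC x). Qed.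

Lemma dotvZr (a : R) x y : dotv x (a *: y) = a * dotv x y.
Proof. by rewrite dotvC dotvZl dotvC. Qed.

Lemma dotvBr x y z : dotv x (y - z) = dotv x y - dotv x z.
Proof. by rewrite dotvC dotvBl !(dotvC x). Qed.

Lemma dotv_sumr I (r : seq I) (P : pred I) (F : I -> 'rV[R]_n) x :
  dotv x (\sum_(i <- r | P i) F i) = \sum_(i <- r | P i) dotv x (F i).
Proof.
rewrite /dotv; under eq_bigr do rewrite summxE mulr_sumr.
exact: exchange_big.
Qed.

Lemma dotvv_ge0 x : 0 <= dotv x x.
Proof. by apply: sumr_ge0 => i _; rewrite -expr2 sqr_ge0. Qed.

Lemma norm2_ge0 x : 0 <= norm2 x.
Proof. exact: sqrtr_ge0. Qed.

Lemma norm2_sqr x : norm2 x ^+ 2 = dotv x x.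
Proof. by rewrite sqr_sqrtr // dotvv_ge0. Qed.

Lemma norm2Z (a : R) x : norm2 (a *: x) = `|a| * norm2 x.
Proof.
by rewrite /norm2 dotvZl dotvZr mulrA -expr2 sqrtrM ?sqr_ge0 // sqrtr_sqr.
Qed.

Lemma dotv_sqr_le x y : dotv x y ^+ 2 <= dotv x x * dotv y y.
Proof.
set a := dotv x x; set b := dotv y y; set c := dotv x y.
have a_ge0 : 0 <= a := dotvv_ge0 x; have b_ge0 : 0 <= b := dotvv_ge0 y.
have expand (u v : 'rV[R]_n) :
    dotv (u + v) (u + v) = dotv u u + dotv u v *+ 2 + dotv v v.
  by rewrite !(dotvDl, dotvDr) (dotvC v u); ring.
have := dotvv_ge0 (b *: x + (- c) *: y); have := dotvv_ge0 (a *: y + (- c) *: x).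
have := dotvv_ge0 (x + y); have := dotvv_ge0 (x + (- 1) *: y).
rewrite !expand !(dotvZl, dotvZr) (dotvC y x) -/a -/b -/c => sq_xmy sq_xpy sq_ay sq_bx.
have ab : 0 <= (a + b) * (a * b - c ^+ 2) by rewrite expr2; lra.
have [ab_gt0|] := ltrP 0 (a + b); first by rewrite -subr_ge0 -(pmulr_rge0 _ ab_gt0).
move=> ab_le0; have [-> ->] : a = 0 /\ b = 0 by split; lra.
have -> : c = 0 by lra.
by rewrite expr2 !mulr0.
Qed.

Lemma dotv_norm_le x y : `|dotv x y| <= norm2 x * norm2 y.
Proof.
rewrite -sqrtrM ?dotvv_ge0 // -sqrtr_sqr ler_sqrt ?mulr_ge0 ?dotvv_ge0 //.
exact: dotv_sqr_le.
Qed.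

Lemma norm2D_le x y : norm2 (x + y) <= norm2 x + norm2 y.
Proof.
rewrite -ler_sqr ?nnegrE ?addr_ge0 ?norm2_ge0 // sqrrD !norm2_sqr.
have := ler_norm (dotv x y); have := dotv_norm_le x y.
rewrite !(dotvDl, dotvDr) (dotvC y x); lra.
Qed.

Lemma norm2_sum_le I (r : seq I) (P : pred I) (F : I -> 'rV[R]_n) :
  norm2 (\sum_(i <- r | P i) F i) <= \sum_(i <- r | P i) norm2 (F i).
Proof.
elim/big_rec2: _ => [|i u s _ IH].
  by rewrite /norm2 /dotv big1 ?sqrtr0 // => i _; rewrite mxE mul0r.
by apply: le_trans (norm2D_le _ _) _; rewrite lerD2l.
Qed.

End InnerProduct.

Section Gradient.
Context {R : realType} {n : nat}.
Variable f : 'rV[R]_n -> R.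
Implicit Types (x y z h : 'rV[R]_n).

Lemma diff_dotv z h : 'd f z h = dotv (grad f z) h.
Proof.
rewrite {1}(row_sum_delta h) linear_sum; apply: eq_bigr => i _.
by rewrite linearZ /= mxE mulrC.
Qed.

Lemma is_derive_along z h s : differentiable f (z + s *: h) ->
  is_derive s 1 (fun t => f (z + t *: h)) (dotv (grad f (z + s *: h)) h).
Proof.
move=> f_diff; rewrite -diff_dotv.
have shiftE :
    (fun e : R => e^-1 *: (((fun t => f (z + t *: h)) \o shift s) (e *: 1)
                           - f (z + s *: h)))
  = (fun e : R => e^-1 *: ((f \o shift (z + s *: h)) (e *: h)
                           - f (z + s *: h))).
  apply/funext => e /=; congr (_ *: (f _ - _)).
  by rewrite /shift /= scaler1 scalerDl addrCA addrA.
split; first by rewrite /derivable shiftE; exact: diff_derivable.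
by rewrite /derive shiftE -/(derive f _ h) deriveE.
Qed.

Lemma ellf_ge0 x y : 0 <= ellf f x y.
Proof.
rewrite /ellf; case: eqP => _ //.
by apply: divr_ge0; rewrite ?sqr_ge0 // mulr_ge0 // normr_ge0.
Qed.

End Gradient.

Section Smoothness.
Context {R : realType} {n : nat}.
Variables (f : 'rV[R]_n -> R) (L : R).
Hypothesis f_diff : forall y, differentiable f y.
Hypothesis grad_lip : forall y z, norm2 (grad f y - grad f z) <= L * norm2 (y - z).
Implicit Types (x y : 'rV[R]_n).

Lemma descent_signed (k : R) x y : `|k| = 1 ->
  k * (f y - f x - dotv (grad f x) (y - x)) <= L / 2 * norm2 (y - x) ^+ 2.
Proof.
move=> k_norm; set h := y - x; set c := dotv (grad f x) h.
set M := L / 2 * norm2 h ^+ 2.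
pose phi : R -> R :=
  k \*: ((fun t => f (x + t *: h)) - c \*: id) - M \*: (id * id : R -> R).
have dphi (s : R) :
    is_derive s 1 phi (k * (dotv (grad f (x + s *: h)) h - c) - M * (s + s)).
  apply: is_derive_eq.
    exact: (is_deriveB (is_deriveZ k (is_deriveB (is_derive_along _ _ _ _ (f_diff _))
       (is_deriveZ c (@is_derive_id _ _ s 1))))
       (is_deriveZ M (is_deriveM (@is_derive_id _ _ s 1) (@is_derive_id _ _ s 1)))).
  by rewrite /= -[c%:A]/(c * 1) -[(id s)%:A]/(s * 1) !mulr1.
have phi'_le0 (s : R) : 0 < s ->
    k * (dotv (grad f (x + s *: h)) h - c) - M * (s + s) <= 0.
  move=> s_gt0; rewrite subr_le0 /c -dotvBl.
  have lip := grad_lip (x + s *: h) x.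
  have step : x + s *: h - x = s *: h by rewrite addrC addKr.
  rewrite step norm2Z gtr0_norm // in lip.
  apply: le_trans (ler_norm _) _; rewrite normrM k_norm mul1r.
  apply: le_trans (dotv_norm_le _ _) _.
  have -> : M * (s + s) = L * (s * norm2 h) * norm2 h by rewrite /M expr2; field.
  by apply: ler_wpM2r; [exact: norm2_ge0 | exact: lip].
have phi_cont : {within `[0, 1], continuous phi}.
  apply: continuous_subspaceT => s.
  by apply: differentiable_continuous; apply/derivable1_diffP; case: (dphi s).
have : phi 1 <= phi 0.
  apply: (@ler0_derive1_le_cc _ phi 0 1) => //; rewrite ?in_itv /= ?lexx ?ler01 //.
  move=> s; rewrite in_itv /= => /andP[s_gt0 _].
  by rewrite derive1E; case: (dphi s) => _ ->; exact: phi'_le0.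
have phiE t : phi t = k * (f (x + t *: h) - c * t) - M * (t * t) by [].
have xh : x + h = y by rewrite addrC subrK.
rewrite !phiE scale1r scale0r addr0 xh !(mulr0, mulr1, subr0).
move: (f y) (f x) => fy fx; lra.
Qed.

Lemma descent x y :
  `|f y - f x - dotv (grad f x) (y - x)| <= L / 2 * norm2 (y - x) ^+ 2.
Proof.
have := descent_signed 1 x y (normr1 R).
have := descent_signed (-1) x y (normrN1 R).
by rewrite ler_norml; lra.
Qed.

(* [L] is arbitrary when [n = 0], as then all vectors coincide. *)
Lemma ellf_le x y : ellf f x y <= Num.max L 0.
Proof.
rewrite /ellf; case: eqP => _; first by rewrite le_max lexx orbT.
have [->|N_neq0] := eqVneq (norm2 (y - x) ^+ 2) 0.
  by rewrite invr0 mulr0 le_max lexx orbT.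
have N_gt0 : 0 < norm2 (y - x) ^+ 2 by rewrite lt0r N_neq0 sqr_ge0.
rewrite ler_pdivrMr //; have := descent x y.
have : L <= Num.max L 0 by rewrite le_max lexx.
move: (Num.max L 0) => m; nra.
Qed.

End Smoothness.

Section ConvexHull.
Context {R : realType} {n : nat}.
Implicit Types (A : set 'rV[R]_n) (p q u z : 'rV[R]_n).

Lemma coord_le_norm p i : `|p 0 i| <= `|p|.
Proof.
by rewrite [X in _ <= X]/Num.norm /= mx_normrE (bigD1 (0, i)) //= le_max lexx.
Qed.

Lemma norm2_le_diam A p q : compact A -> A p -> A q -> norm2 (p - q) <= diam A.
Proof.
move=> /compact_bounded [M0 [_ boundedA]] Ap Aq.
have {boundedA} [M le_M] : exists M, forall x, A x -> `|x| <= M.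
  by exists (M0 + 1); apply: boundedA; rewrite ltrDl.
apply: ub_le_sup; last by exists p, q.
exists (Num.sqrt (((M + M) ^+ 2) *+ n)) => _ [a [b [Aa [Ab ->]]]].
rewrite ler_sqrt ?mulrn_wge0 ?sqr_ge0 // -[n in _ *+ n]card_ord -sumr_const.
apply: ler_sum => i _; rewrite -expr2 -real_normK ?num_real //.
rewrite ler_sqr ?nnegrE ?normr_ge0 ?addr_ge0 ?(le_trans (normr_ge0 a) (le_M _ Aa)) //.
apply: le_trans (coord_le_norm _ _) _; apply: le_trans (ler_normB _ _) _.
by apply: lerD; apply: le_M.
Qed.

Lemma sub_conv_hull A : A `<=` conv_hull A.
Proof.
move=> p Ap; exists 1%N, (fun=> 1), (fun=> p).
by rewrite !big_ord1 scale1r.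
Qed.

Lemma conv_hull_step A z u (g : R) : conv_hull A z -> A u -> 0 <= g <= 1 ->
  conv_hull A (z - g *: (z - u)).
Proof.
move=> [k [w [p [w_ge0 [w_sum1 [Ap ->]]]]]] Au /andP[g_ge0 g_le1].
pose w' i := if unlift ord0 i is Some j then (1 - g) * w j else g.
pose p' i := if unlift ord0 i is Some j then p j else u.
have w'_lift (j : 'I_k) : w' (lift ord0 j) = (1 - g) * w j by rewrite /w' liftK.
have p'_lift (j : 'I_k) : p' (lift ord0 j) = p j by rewrite /p' liftK.
have w'0 : w' ord0 = g by rewrite /w' unlift_none.
have p'0 : p' ord0 = u by rewrite /p' unlift_none.
exists k.+1, w', p'; split; [|split; [|split]].
- by move=> i; rewrite /w'; case: unlift => [j|] //; rewrite mulr_ge0 // subr_ge0.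
- rewrite big_ord_recl w'0; under eq_bigr do rewrite w'_lift.
  by rewrite -mulr_sumr w_sum1 mulr1 addrC subrK.
- by move=> i; rewrite /p'; case: unlift.
- rewrite big_ord_recl w'0 p'0.
  under [in RHS]eq_bigr do rewrite w'_lift p'_lift -scalerA.
  rewrite -scaler_sumr scalerBr scalerBl scale1r.
  by rewrite opprB addrA addrAC addrC.
Qed.

Lemma conv_hull_dotv_ge A q (c : R) z :
  (forall p, A p -> c <= dotv q p) -> conv_hull A z -> c <= dotv q z.
Proof.
move=> le_c [k [w [p [w_ge0 [w_sum1 [Ap ->]]]]]].
rewrite dotv_sumr -[c]mul1r -w_sum1 mulr_suml; apply: ler_sum => i _.
by rewrite dotvZr ler_wpM2l ?le_c.
Qed.

Lemma conv_hull_norm2_le A u (D : R) z :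
  (forall p, A p -> norm2 (p - u) <= D) -> conv_hull A z -> norm2 (z - u) <= D.
Proof.
move=> le_D [k [w [p [w_ge0 [w_sum1 [Ap ->]]]]]].
have -> : \sum_(i < k) w i *: p i - u = \sum_(i < k) w i *: (p i - u).
  by under [RHS]eq_bigr do rewrite scalerBr; rewrite sumrB -scaler_suml w_sum1 scale1r.
apply: le_trans (norm2_sum_le _ _ _ _) _.
rewrite -[D]mul1r -w_sum1 mulr_suml; apply: ler_sum => i _.
by rewrite norm2Z ger0_norm ?ler_wpM2l ?le_D.
Qed.

End ConvexHull.

Lemma convex_fun_grad_le {R : realType} {n : nat} (f : 'rV[R]_n -> R) x y :
  convex_fun f -> differentiable f x -> f x + dotv (grad f x) (y - x) <= f y.
Proof.
move=> f_cvx f_diff; rewrite -lerBrDl -diff_dotv -deriveE //.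
set h := y - x.
pose q (e : R) := e^-1 *: ((f \o shift x) (e *: h) - f x).
have q_cvg : q e @[e --> 0^'+] --> 'D_h f x.
  exact/cvg_dnbhs_at_right/(diff_derivable f_diff).
rewrite -(cvg_lim _ q_cvg) //; apply: limr_le; first by apply/cvg_ex; exists ('D_h f x).
near=> e.
have e_gt0 : 0 < e by near: e; exact: nbhs_right_gt.
have e_le1 : e <= 1 by near: e; apply: nbhs_right_le; exact: ltr01.
have := f_cvx y x e; rewrite e_le1 ltW //= => /(_ isT).
have -> : e *: y + (1 - e) *: x = e *: h + x.
  by apply/rowP => i; rewrite !mxE; ring.
move=> f_cvx_e; rewrite /q /shift /= -[e^-1 *: _]/(e^-1 * _) mulrC ler_pdivrMr //; lra.
Unshelve. all: by end_near.
Qed.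

Section Damping.
Context {R : realType}.

Lemma partial_prod_ge_lim (rs : nat -> R) (r : R) N : (forall t, 0 <= rs t <= 1) ->
  (fun M => \prod_(t < M) rs t) @ \oo --> r -> r <= \prod_(t < N) rs t.
Proof.
move=> rs01 prod_cvg; rewrite -(cvg_lim _ prod_cvg) //.
apply: nonincreasing_cvgn_ge; last exact: cvgP prod_cvg.
apply/nonincreasing_seqP => k; rewrite big_ord_recr /=.
have [rs_ge0 rs_le1] := andP (rs01 k).
by rewrite ler_piMr // prodr_ge0 // => i _; case/andP: (rs01 i).
Qed.

Lemma natr_le_floor_log (eta c L : R) (m : nat) : 1 < eta -> 0 < c ->
  eta ^+ m * c <= L -> (m%:R : R) <= (Num.floor (ln (L / c) / ln eta))%:~R.
Proof.
move=> eta_gt1 c_gt0 le_L.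
have eta_gt0 : 0 < eta by apply: lt_trans eta_gt1.
have L_gt0 : 0 < L by apply: lt_le_trans le_L; rewrite mulr_gt0 ?exprn_gt0.
have : ln (eta ^+ m * c) <= ln L by rewrite ler_ln ?posrE ?mulr_gt0 ?exprn_gt0.
rewrite lnM ?posrE ?exprn_gt0 // lnXn // => le_lnL.
rewrite -[m%:R]/((m%:Z)%:~R : R) ler_int floor_ge_int.
rewrite -[(m%:Z)%:~R]/(m%:R : R) ln_div ?posrE // ler_pdivlMr ?ln_gt0 //.
by rewrite -mulr_natl in le_lnL; lra.
Qed.

Variables (eta : R) (rs Ls : nat -> R).
Hypotheses (eta_gt1 : 1 < eta) (rs01 : forall t, 0 <= rs t <= 1).
Hypotheses (Ls0_gt0 : 0 < Ls 0%N) (Ls_damped : forall t, rs t * Ls t <= Ls t.+1).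
Let eta_ge0 : 0 <= eta := ltW (lt_trans ltr01 eta_gt1).
Let prod_ge0 t : 0 <= \prod_(s < t) rs s.
Proof. by apply: prodr_ge0 => s _; case/andP: (rs01 s). Qed.

Lemma Ls_ge_pow_count t :
  eta ^+ count (predC (in_I eta Ls)) (iota 0 t) * \prod_(s < t) rs s * Ls 0%N <= Ls t.
Proof.
elim: t => [|t IH]; first by rewrite big_ord0 !mul1r.
rewrite big_ord_recr -[in iota _ _]addn1 iotaD count_cat /= add0n.
have [rs_ge0 rs_le1] := andP (rs01 t).
set a := eta ^+ _ in IH; set P := \prod_(s < t) rs s in IH *.
have aPL_ge0 : 0 <= a * P * Ls 0%N.
  by rewrite !mulr_ge0 ?exprn_ge0 ?eta_ge0 ?prod_ge0 ?(ltW Ls0_gt0).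
have [I_t | nI_t] := boolP (in_I eta Ls t).
- rewrite /= !addn0 -/a; apply: le_trans (Ls_damped t).
  have -> : a * (P * rs t) * Ls 0%N = rs t * (a * P * Ls 0%N) by ring.
  exact: ler_wpM2l.
- rewrite /= addn0 addn1 exprSr -/a.
  rewrite /in_I -ltNge in nI_t; apply: le_trans (ltW nI_t).
  have -> : a * eta * (P * rs t) * Ls 0%N = eta * (rs t * (a * P * Ls 0%N)) by ring.
  by apply: ler_wpM2l => //; apply: le_trans IH; rewrite ler_piMl.
Qed.

Lemma count_in_I_ge (L r : R) t :
  0 < r -> (forall N, r <= \prod_(s < N) rs s) -> (forall s, Ls s <= L) ->
  ((t.+1)%:R : R) - (Num.floor (ln (L / (r * Ls 0%N)) / ln eta))%:~R
    <= (count (in_I eta Ls) (iota 0 t.+1))%:R.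
Proof.
move=> r_gt0 r_le_prod Ls_le.
set m := count (predC (in_I eta Ls)) (iota 0 t.+1).
have count_split : (count (in_I eta Ls) (iota 0 t.+1) + m = t.+1)%N.
  by rewrite count_predC size_iota.
have : (m%:R : R) <= (Num.floor (ln (L / (r * Ls 0%N)) / ln eta))%:~R.
  apply: natr_le_floor_log; rewrite ?mulr_gt0 //.
  apply: le_trans (Ls_le t.+1); apply: le_trans (Ls_ge_pow_count t.+1).
  rewrite mulrA; apply: ler_wpM2r; first exact: ltW.
  by apply: ler_wpM2l; first exact: exprn_ge0.
have -> : ((t.+1)%:R : R) = (count (in_I eta Ls) (iota 0 t.+1))%:R + m%:R.
  by rewrite -natrD count_split.
lra.
Qed.

End Damping.

Section ClosedLoopRun.
Context {R : realType} {n : nat}.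
Context {f : 'rV[R]_n -> R} {A : set 'rV[R]_n} {rs : nat -> R} {xm1 : 'rV[R]_n}.
Context {x v d : nat -> 'rV[R]_n} {gmax gam : nat -> R} {xbar : nat -> 'rV[R]_n}.
Context {Ls : nat -> R}.
Hypothesis run : acfw_cfw_run f A rs xm1 x v d gmax gam xbar Ls.

Let run_step t := proj2 (proj2 (proj2 run)) t.

Lemma run_gmax t : gmax t = 1.
Proof. by case: (run_step t) => _ [_ []]. Qed.

Lemma run_in_G t : in_G gmax gam t.
Proof. by rewrite /in_G run_gmax lexx. Qed.

Lemma run_Ls_ge0 t : 0 <= Ls t.
Proof.
case: t => [|t]; first by case: run => _ [_ [-> _]]; exact: ellf_ge0.
have [_ [_ [_ [_ [_ [-> _]]]]]] := run_step t.
by rewrite le_max ellf_ge0.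
Qed.

Lemma run_Ls_damped t : rs t * Ls t <= Ls t.+1.
Proof. by have [_ [_ [_ [_ [_ [-> _]]]]]] := run_step t; rewrite le_max lexx orbT. Qed.

Lemma run_Ls_le (L : R) : (forall y, differentiable f y) ->
  (forall y z, norm2 (grad f y - grad f z) <= L * norm2 (y - z)) ->
  (forall t, rs t <= 1) -> 0 < Ls 0%N -> forall t, Ls t <= L.
Proof.
move=> f_diff grad_lip rs_le1 L0_gt0.
have Ls_le_max t : Ls t <= Num.max L 0.
  elim: t => [|t IH]; first by case: run => _ [_ [-> _]]; exact: ellf_le.
  have [_ [_ [_ [_ [_ [-> _]]]]]] := run_step t.
  rewrite ge_max ellf_le //=; apply: le_trans IH.
  by rewrite ler_piMl ?run_Ls_ge0.
have L_ge0 : 0 <= L.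
  by have := lt_le_trans L0_gt0 (Ls_le_max 0%N); rewrite lt_max ltxx orbF => /ltW.
by move=> t; have := Ls_le_max t; rewrite max_l.
Qed.

Lemma run_gam_01 t : conv_hull A (x t) -> 0 <= gam t <= 1.
Proof.
move=> x_in; have [[_ v_min] [-> [-> [-> _]]]] := run_step t.
rewrite ge_min lexx orbT andbT le_min ler01 andbT.
rewrite divr_ge0 ?mulr_ge0 ?run_Ls_ge0 ?norm2_ge0 //.
by rewrite dotvBr subr_ge0; apply: conv_hull_dotv_ge x_in => p /v_min.
Qed.

Lemma run_x_in_hull t : conv_hull A (x t).
Proof.
elim: t => [|t IH]; first by case: run => _ [[x0_in _] _]; exact: sub_conv_hull.
have [[v_in _] [d_eq [_ [_ [-> [_ ->]]]]]] := run_step t.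
by case: ifP => // _; rewrite d_eq; exact: conv_hull_step IH v_in (run_gam_01 _ IH).
Qed.

Lemma run_step_in_hull t (g : R) : 0 <= g <= gmax t -> conv_hull A (x t - g *: d t).
Proof.
rewrite run_gmax => g_01; have [[v_in _] [-> _]] := run_step t.
exact: conv_hull_step (run_x_in_hull t) v_in g_01.
Qed.

Lemma run_d_le_diam t : compact A -> norm2 (d t) <= diam A.
Proof.
move=> A_cpt; have [[v_in _] [-> _]] := run_step t.
apply: conv_hull_norm2_le (run_x_in_hull t) => p p_in.
exact: norm2_le_diam.
Qed.

Lemma run_gap_le t z : convex_fun f -> differentiable f (x t) -> conv_hull A z ->
  f (x t) - f z <= dotv (grad f (x t)) (d t).
Proof.
move=> f_cvx f_diff z_in; have [[_ v_min] [-> _]] := run_step t.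
have := convex_fun_grad_le _ _ z f_cvx f_diff.
have : dotv (grad f (x t)) (v t) <= dotv (grad f (x t)) z.
  by apply: conv_hull_dotv_ge z_in => p /v_min.
rewrite !dotvBr; lra.
Qed.

End ClosedLoopRun.

Theorem lemma5 (R : realType) (n : nat) (A : set 'rV[R]_n) (f : 'rV[R]_n -> R)
  (L eta : R) (rs : nat -> R) (r : R)
  (xm1 : 'rV[R]_n) (x v d : nat -> 'rV[R]_n) (gmax gam : nat -> R)
  (xbar : nat -> 'rV[R]_n) (Ls : nat -> R) :
  compact A ->
  (forall y, differentiable f y) ->
  (forall y z, norm2 (grad f y - grad f z) <= L * norm2 (y - z)) ->
  1 < eta ->
  (* Condition (D) *)
  (forall t, 0 < rs t <= 1) ->
  (fun N : nat => \prod_(t < N) rs t) @ \oo --> r ->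
  0 < r <= 1 ->
  acfw_cfw_run f A rs xm1 x v d gmax gam xbar Ls ->
  0 < Ls 0%N ->
  (* Condition (S)(i) *)
  (forall t, norm2 (d t) <= diam A /\
     (forall g, 0 <= g <= gmax t -> conv_hull A (x t - g *: d t))) /\
  (* Condition (S)(ii) *)
  (forall N : nat, exists2 t : nat, (N <= t)%N & in_G gmax gam t) /\
  (* quantitative count *)
  (forall t : nat,
     ((t.+1)%:R : R) - (Num.floor (ln (L / (r * Ls 0%N)) / ln eta))%:~R
       <= (count (fun s => in_G gmax gam s && in_I eta Ls s) (iota 0 t.+1))%:R) /\
  (* Condition (S)(iii) with R = 1 when f is convex *)
  (convex_fun f ->
     forall xstar, conv_hull A xstar -> (forall y, conv_hull A y -> f xstar <= f y) ->
     forall t, f (x t) - f xstar <= dotv (grad f (x t)) (d t)).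
Proof.
move=> A_cpt f_diff grad_lip eta_gt1 rs_bnd prod_cvg /andP[r_gt0 _] run L0_gt0.
have rs01 t : 0 <= rs t <= 1 by case/andP: (rs_bnd t) => /ltW -> ->.
have rs_le1 t : rs t <= 1 by case/andP: (rs01 t).
have Ls_le := run_Ls_le run _ f_diff grad_lip rs_le1 L0_gt0.
split; [|split; [|split]].
- move=> t; split; first exact: run_d_le_diam run t A_cpt.
  exact: run_step_in_hull run t.
- by move=> N; exists N; [exact: leqnn | exact: (run_in_G run N)].
- move=> t; rewrite (eq_count (a2 := in_I eta Ls)) => [|s]; last first.
    by rewrite (run_in_G run).
  apply: count_in_I_ge => // [s|N].
  + exact: run_Ls_damped run s.
  + exact: partial_prod_ge_lim.
(* (iii) holds for every point of conv(A), optimal or not. *)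
- move=> f_cvx xstar xstar_in _ t.
  exact: run_gap_le run t xstar f_cvx (f_diff _) xstar_in.
Qed.
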